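(* Let $D,k\ge 1$ and $b\ge 0$ be integers. Every rooted tree $T$ of maximum degree at most $D$, with $b(T)\le b$, and with more than $f(D,b,k)$ leaves contains a comb with $k$ teeth, all of which are leaves of $T$.
   Context: For a rooted tree $T$, $b(T)$ denotes the maximum depth of a rooted complete binary tree which appears in $T$ as a rooted minor (the depth of a rooted tree is the maximum number of edges of a root-leaf path). The function $f:\mathbb{N}^3\to\mathbb{N}$ is defined recursively by $f(D,b,k)=1$ if $k=1$ or $b=0$, and $f(D,b,k)=f(D,b,k-1)+(D-1)\cdot f(D,b-1,k-1)$ if $k\ge 2$ and $b\ge 1$. A comb with teeth $v_1,\ldots,v_k$ is a tree consisting of a path $P$ (the spine) and vertex-disjoint paths $P_1,\ldots,P_k$ of length at least one such that $P_i$ joins $v_i$ to a vertex of $P$. *)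

From mathcomp Require Import all_boot.
Set Implicit Arguments. Unset Strict Implicit. Unset Printing Implicit Defensive.

Section Graphs.
Variable V : finType.
Implicit Types (e : rel V) (r x y : V) (A : {set V}).

Definition acyclic e := forall c : seq V, 2 < size c -> ~~ ucycleb e c.
Definition is_tree e :=
  [/\ symmetric e, irreflexive e, (forall x y, connect e x y) & acyclic e].

Definition nbhd e x : {set V} := [set y | e x y].

(* Leaves of the tree rooted at r: vertices without children, i.e. non-root
   vertices of degree 1 (and the root only when it is the unique vertex). *)
Definition is_leaf e r x : bool :=
  if x == r then #|nbhd e x| == 0 else #|nbhd e x| == 1.

Definition connected_in e A :=
  forall x y, x \in A -> y \in A ->
    connect [rel u v | [&& e u v, u \in A & v \in A]] x y.

Definition rooted_minor (W : finType) (eH : rel W) (rH : W) e r :=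
  exists phi : W -> {set V},
  [/\ (forall w, phi w != set0),
      (forall w, connected_in e (phi w)),
      (forall w w', w != w' -> [disjoint phi w & phi w']),
      (forall w w', eH w w' ->
         exists x y, [/\ x \in phi w, y \in phi w' & e x y])
    & r \in phi rH].

Definition is_path e (p : seq V) : bool :=
  if p is x :: s then path e x s && uniq p else false.

(* Spine P; tooth paths Q i = [v_i; ...; u_i] of length >= 1 with u_i on P
   (and only u_i on P), pairwise vertex-disjoint, tooth v_i a leaf of T. *)
Definition has_leaf_comb e r (k : nat) :=
  exists (P : seq V) (Q : 'I_k -> seq V),
  [/\ is_path e P,
      (forall i, [/\ is_path e (Q i), 1 < size (Q i) & last r (Q i) \in P]),
      (forall i x, x \in Q i -> x != last r (Q i) -> x \notin P),
      (forall i j x, i != j -> x \in Q i -> x \notin Q j)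
    & (forall i, is_leaf e r (head r (Q i)))].

End Graphs.

(* Rooted complete binary tree of depth d, in heap numbering:
   vertices 0 .. 2^(d+1)-2, root 0, children of i are 2i+1 and 2i+2. *)
Definition cbt_size (d : nat) := 2 ^ d.+1 - 1.

Lemma cbt_size_gt0 d : 0 < cbt_size d.
Proof. by rewrite /cbt_size subn_gt0 -{1}(expn0 2) ltn_exp2l. Qed.

Definition cbt_root (d : nat) : 'I_(cbt_size d) := Ordinal (cbt_size_gt0 d).

Definition cbt_rel (d : nat) : rel 'I_(cbt_size d) :=
  fun i j => [|| (j : nat) == i.*2.+1, (j : nat) == i.*2.+2,
                 (i : nat) == j.*2.+1 | (i : nat) == j.*2.+2].

Definition binary_rooted_minor (V : finType) (e : rel V) (r : V) (d : nat) :=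
  rooted_minor (@cbt_rel d) (cbt_root d) e r.

Fixpoint f (D b k : nat) {struct k} : nat :=
  match k with
  | 0 => 1
  | k'.+1 =>
    match k' with
    | 0 => 1
    | _ => match b with
           | 0 => 1
           | b'.+1 => f D b k' + (D - 1) * f D b' k'
           end
    end
  end.

From mathcomp Require Import all_boot zify.
From Stdlib Require Import Classical_Prop.
Set Implicit Arguments. Unset Strict Implicit. Unset Printing Implicit Defensive.

(* Induction on the subtree T_v hanging from a vertex v, for all b and k at
   once: if T_v has no binary minor of depth b+1 rooted at v and more than
   f(D,b,k) leaves, then it contains a comb with k leaf teeth whose spine
   starts at v. A single child prolongs the spine. With two children c, c',
   a comb with k-1 teeth rooted at c and a path from v through c' down to a
   leaf give k teeth; by induction such a comb exists unless every child has
   at most f(D,b,k-1) leaves and every child without a binary minor of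
   depth b has at most f(D,b-1,k-1). Two children with such minors would
   give one of depth b+1 at v, so all children but one are of the second
   kind and T_v has at most f(D,b,k-1) + (D-1) f(D,b-1,k-1) = f(D,b,k)
   leaves. *)

(* Vertex j of the heap-numbered complete binary tree, as its word of moves
   from the root 0: the children 2j+1 and 2j+2 are reached by [false] and
   [true]. The fuel n only has to be at least j. *)
Fixpoint heap_word_fuel (n j : nat) : seq bool :=
  if n is n'.+1 then
    if j is j'.+1 then rcons (heap_word_fuel n' j'./2) (odd j') else [::]
  else [::].

Definition heap_word (j : nat) : seq bool := heap_word_fuel j j.

Definition heap_index (s : seq bool) : nat :=
  foldl (fun i (x : bool) => (i.*2 + x).+1) 0 s.

Lemma heap_word_fuel_eq n m j : j <= n -> j <= m ->
  heap_word_fuel n j = heap_word_fuel m j.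
Proof.
elim: n m j => [|n IH] m j; first by rewrite leqn0 => /eqP->; case: m.
case: j => [|j] jn jm; first by case: m {jm}.
case: m jm => [//|m] jm /=; congr rcons; apply: IH; rewrite -divn2; lia.
Qed.

Lemma heap_wordS j : heap_word j.+1 = rcons (heap_word j./2) (odd j).
Proof.
by rewrite /heap_word /=; congr rcons; apply: heap_word_fuel_eq; rewrite -divn2; lia.
Qed.

Lemma heap_wordK : cancel heap_word heap_index.
Proof.
move=> j; have [n] := ubnP j; elim: n j => // n IH [//|j] jn.
rewrite heap_wordS /heap_index foldl_rcons -/(heap_index _) IH; last first.
  by rewrite -divn2; lia.
by rewrite -{3}(odd_double_half j) addnC.
Qed.

Lemma heap_word_inj : injective heap_word.
Proof. exact: can_inj heap_wordK. Qed.

Lemma size_heap_word m j : j < cbt_size m -> size (heap_word j) <= m.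
Proof.
rewrite /cbt_size; elim: m j => [|m IH] [|j] //.
rewrite heap_wordS size_rcons ltnS => jm; apply: IH.
move: jm; rewrite !expnS -{1}(odd_double_half j) -!muln2.
have : 0 < 2 ^ m by rewrite expn_gt0.
by case: (odd j) => /=; lia.
Qed.

Lemma heap_word_cbt_rel m (i j : 'I_(cbt_size m)) : cbt_rel i j ->
  (exists x, heap_word j = rcons (heap_word i) x) \/
  (exists x, heap_word i = rcons (heap_word j) x).
Proof.
have wordL k : heap_word k.*2.+1 = rcons (heap_word k) false.
  by rewrite heap_wordS doubleK odd_double.
have wordR k : heap_word k.*2.+2 = rcons (heap_word k) true.
  by rewrite heap_wordS /= uphalf_double odd_double.
case/or4P => /eqP->; rewrite ?wordL ?wordR; by [left; eexists | right; eexists].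
Qed.

Lemma card_bigcup_leq (T I : finType) (P : {set I}) (F : I -> {set T}) :
  #|\bigcup_(i in P) F i| <= \sum_(i in P) #|F i|.
Proof.
elim/big_rec2: _ => [|i A n iP h]; first by rewrite cards0.
by apply: leq_trans (leq_card_setU _ _) _; rewrite leq_add2l.
Qed.

Lemma f_gt0 D b k : 0 < f D b k.
Proof.
elim: k b => [|k IH] [|b] //; case: k IH => // k IH.
exact: leq_trans (IH b.+1) (leq_addr _ _).
Qed.

Lemma sum_leq_f (I : finType) (C : {set I}) c0 (g : I -> nat) D b k :
  c0 \in C -> #|C| <= D -> g c0 <= f D b.+1 k.+1 ->
  (forall c, c \in C -> c != c0 -> g c <= f D b k.+1) ->
  \sum_(c in C) g c <= f D b.+1 k.+2.
Proof.
move=> c0C CD gc0 gC; rewrite (big_setD1 c0 c0C) /=; apply: leq_add => //.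
apply: leq_trans (_ : _ <= \sum_(c in C :\ c0) f D b k.+1) _.
  by apply: leq_sum => c; rewrite !inE => /andP[cc0 cC]; apply: gC.
rewrite sum_nat_const leq_mul2r; apply/orP; right.
by move: CD; rewrite (cardsD1 c0) c0C; lia.
Qed.

Section Paths.
Variables (V : finType) (e : rel V).

Lemma is_path_cons x p : is_path e p -> e x (head x p) -> x \notin p ->
  is_path e (x :: p).
Proof.
case: p => [//|y p] /andP[pth uq] exy xp.
by rewrite /is_path (cons_uniq x) xp uq /= exy pth.
Qed.

Lemma is_path_rcons x p y : is_path e p -> e (last x p) y -> y \notin p ->
  is_path e (rcons p y).
Proof.
case: p => [//|z p] /andP[pth uq] ezy yp.
by rewrite /is_path rcons_uniq yp uq /= rcons_path pth ezy.
Qed.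

Lemma connect_uniq_path (R : rel V) a x : connect R a x ->
  exists p, [/\ path R a p, last a p = x & uniq (a :: p)].
Proof. by case/connectP=> p /shortenP[p' pth uq _] ->; exists p'. Qed.

Lemma connected_in1 v : connected_in e [set v].
Proof. by move=> x y; rewrite !inE => /eqP-> /eqP->; apply: connect0. Qed.

Hypothesis esym : symmetric e.

Lemma connected_inU1 (X : {set V}) c v : connected_in e X -> c \in X -> e v c ->
  connected_in e (v |: X).
Proof.
move=> connX cX evc.
set R := [rel u w | [&& e u w, u \in v |: X & w \in v |: X]].
have RX x y : x \in X -> y \in X -> connect R x y.
  move=> xX yX; apply: connect_sub (connX x y xX yX) => a b /and3P[eab aX bX].
  by apply: connect1; rewrite /R /= eab !setU1r.
have Rc x : x \in v |: X -> connect R x c /\ connect R c x.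
  case/setU1P=> [->|xX]; last by split; apply: RX.
  have cvX : c \in v |: X := setU1r v cX.
  by split; apply: connect1; rewrite /R /= setU11 cvX ?evc // esym evc.
by move=> x y /Rc[xc _] /Rc[_ cy]; apply: connect_trans xc cy.
Qed.

Definition away (v : V) : rel V := [rel a b | [&& e a b, a != v & b != v]].

Lemma away_sym v : symmetric (away v).
Proof. by move=> a b; rewrite /away /= esym [(b != v) && _]andbC. Qed.

Lemma away_sub v : subrel (away v) e.
Proof. by move=> a b /andP[]. Qed.

Lemma away_path_notin v a p : path (away v) a p -> v \notin p.
Proof.
elim: p a => [//|y p IH] a /= /andP[/and3P[_ _ yv] /IH].
by rewrite inE negb_or eq_sym yv.
Qed.

Lemma connect_away_notin v a x : a != v -> connect (away v) a x -> x != v.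
Proof.
move=> av /connectP[p pth ->]; apply: contraNneq (away_path_notin pth) => lv.
by move: (mem_last a p); rewrite lv inE eq_sym (negbTE av).
Qed.

End Paths.

Section Branches.
Variables (V : finType) (e : rel V).
Hypotheses (esym : symmetric e) (eirr : irreflexive e) (eacyc : acyclic e).

Definition branch (v c : V) : {set V} := [set x | connect (away e v) c x].

Lemma adj_neq a b : e a b -> a != b.
Proof. by apply: contraTneq => ->; rewrite eirr. Qed.

Lemma mem_branch v c : c \in branch v c.
Proof. by rewrite inE connect0. Qed.

Lemma branch_notin v c : e v c -> v \notin branch v c.
Proof.
move=> evc; have cv : c != v by rewrite eq_sym adj_neq.
by rewrite inE; apply/negP => /(connect_away_notin cv); rewrite eqxx.
Qed.

Lemma no_away_connect v a b : e v a -> e v b -> a != b -> ~~ connect (away e v) a b.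
Proof.
move=> eva evb ab; apply/negP => /connect_uniq_path[p [pth lst uq]].
have av : a != v by rewrite eq_sym adj_neq.
have p0 : p != [::] by apply: contraNneq ab => p0; rewrite -lst p0.
have := eacyc (c := v :: a :: p); rewrite /= ltnS ltnS lt0n size_eq0 p0.
move/(_ isT)/negP; apply; rewrite /ucycleb /cycle /= rcons_path eva.
rewrite (sub_path (@away_sub _ e v) pth) lst esym evb inE negb_or eq_sym av.
by rewrite (away_path_notin pth) -[_ && _]/(uniq (a :: p)) uq.
Qed.

Lemma branch_disjoint v c1 c2 : e v c1 -> e v c2 -> c1 != c2 ->
  [disjoint branch v c1 & branch v c2].
Proof.
move=> e1 e2 c12; apply/pred0P => x /=; rewrite !inE.
apply/negbTE/negP => /andP[h1 h2].
have := no_away_connect e1 e2 c12; rewrite (connect_trans h1) //.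
by rewrite (sym_connect_sym (away_sym esym v)).
Qed.

Lemma connect_away_switch u w a x : connect (away e u) a x ->
  ~~ connect (away e u) a w -> connect (away e w) a x.
Proof.
move=> /connectP[p pth ->] nw; apply/connectP; exists p => //.
have sub : {in [pred y | connect (away e u) a y] &, subrel (away e u) (away e w)}.
  move=> y z ay az /and3P[eyz _ _]; rewrite /away /= eyz /=.
  rewrite !inE in ay az.
  by apply/andP; split; apply: contraNneq nw => <-.
by apply: (sub_in_path sub _ pth); apply/allP => y; apply: (path_connect pth).
Qed.

Lemma branch_children v c : e v c ->
  branch v c = c |: \bigcup_(c' in nbhd e c :\ v) branch c c'.
Proof.
move=> evc; have cv : c != v by rewrite eq_sym adj_neq.
apply/setP => x; rewrite !inE; apply/idP/idP.
  case: (eqVneq x c) => [->|xc] //= /connect_uniq_path[[|y p] [pth lst uq]].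
    by rewrite -lst eqxx in xc.
  move: pth uq => /= /andP[/and3P[ecy _ yv] pth] /andP[cp uq].
  apply/bigcupP; exists y; first by rewrite !inE yv.
  rewrite inE; apply/connectP; exists p => //.
  have sub : {in predC1 c &, subrel (away e v) (away e c)}.
    by move=> a b; rewrite !inE => ac bc /and3P[eab _ _]; rewrite /away /= eab ac bc.
  apply: (sub_in_path sub _ pth); apply/allP => z zp /=.
  by apply: contraNneq cp => <-.
case/predU1P=> [->|/bigcupP[c' c'C]]; first exact: connect0.
move: c'C; rewrite !inE => /andP[c'v ecc'] c'x.
have nv : ~~ connect (away e c) c' v by apply: no_away_connect; rewrite // esym.
apply: connect_trans (connect1 _) (connect_away_switch c'x nv).
by rewrite /away /= ecc' cv c'v.
Qed.

Lemma branch_childW v c c' : e v c -> c' \in nbhd e c :\ v ->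
  branch c c' \subset branch v c.
Proof.
move=> evc c'C; rewrite [branch v c](branch_children evc).
by apply/subsetP => x xc'; apply/setU1r/bigcupP; exists c'.
Qed.

Lemma branches_cover r : (forall x y, connect e x y) ->
  r |: \bigcup_(c in nbhd e r) branch r c = setT.
Proof.
move=> econn; apply/setP => x; rewrite !inE; case: (eqVneq x r) => //= xr.
have /connect_uniq_path[[|y p] [pth lst uq]] := econn r x.
  by rewrite -lst eqxx in xr.
move: pth uq => /= /andP[ery pth] /andP[rp uq].
apply/bigcupP; exists y; first by rewrite inE.
rewrite inE; apply/connectP; exists p => //.
have sub : {in predC1 r &, subrel e (away e r)}.
  by move=> a b; rewrite !inE => ar br eab; rewrite /away /= eab ar br.
apply: (sub_in_path sub _ pth); apply/allP => z zp /=.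
by apply: contraNneq rp => <-.
Qed.

End Branches.

Section BinaryMinors.
Variables (V : finType) (e : rel V).
Hypothesis esym : symmetric e.

(* A rooted minor of the complete binary tree of depth m inside A, rooted at
   v, whose vertices are indexed by the words of length at most m (see
   heap_word). Nonemptiness of the branch sets follows from the last two
   conditions. *)
Definition binary_minor_in (A : {set V}) (v : V) (m : nat) :=
  exists psi : seq bool -> {set V},
  [/\ forall s, size s <= m -> connected_in e (psi s),
      forall s t, size s <= m -> size t <= m -> s != t -> [disjoint psi s & psi t],
      forall s x, size s < m ->
        exists a b, [/\ a \in psi s, b \in psi (rcons s x) & e a b],
      forall s, size s <= m -> psi s \subset A
    & v \in psi [::]].

Lemma binary_minor_in0 (A : {set V}) v : v \in A -> binary_minor_in A v 0.
Proof.
move=> vA; exists (fun=> [set v]); split=> //.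
- by move=> s _; apply: connected_in1.
- by case=> [|? ?] [|? ?] //; rewrite eqxx.
- by move=> s _; rewrite sub1set.
- exact: set11.
Qed.

Lemma binary_minor_inW (A B : {set V}) v m : A \subset B ->
  binary_minor_in A v m -> binary_minor_in B v m.
Proof.
move=> AB [psi [conn disj adj sub root]]; exists psi; split=> //.
by move=> s sm; apply: subset_trans (sub s sm) AB.
Qed.

Lemma binary_minor_in_parent (A : {set V}) c v m : binary_minor_in A c m ->
  e v c -> v \notin A -> binary_minor_in (v |: A) v m.
Proof.
move=> [psi [conn disj adj sub root]] evc vA.
have vpsi s : size s <= m -> v \notin psi s.
  by move=> sm; apply: contra vA; apply/subsetP/sub.
exists (fun s => if s is [::] then v |: psi [::] else psi s); split.
- case=> [|x s] sm; [exact: connected_inU1 (conn _ sm) root evc | exact: conn].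
- have disj0 t : size t <= m -> t != [::] -> [disjoint v |: psi [::] & psi t].
    move=> tm t0; rewrite disjoints_subset subUset sub1set inE vpsi //=.
    by rewrite -disjoints_subset; apply: disj; rewrite // eq_sym.
  case=> [|x s] [|y t] sm tm st //; first exact: disj0.
    by rewrite disjoint_sym disj0.
  exact: disj.
- case=> [|y s] x sm; last exact: adj.
  by have [a [b [ha hb eab]]] := adj [::] x sm; exists a, b; rewrite setU1r.
- case=> [|x s] sm; last exact: subset_trans (sub _ sm) (subsetU1 v A).
  exact: setUS (sub _ sm).
- exact: setU11.
Qed.

Lemma binary_minor_in_join (A1 A2 : {set V}) c1 c2 v m :
  binary_minor_in A1 c1 m -> binary_minor_in A2 c2 m -> e v c1 -> e v c2 ->
  [disjoint A1 & A2] -> v \notin A1 -> v \notin A2 ->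
  binary_minor_in (v |: (A1 :|: A2)) v m.+1.
Proof.
move=> [p1 [conn1 disj1 adj1 sub1 root1]] [p2 [conn2 disj2 adj2 sub2 root2]].
move=> ev1 ev2 A12 vA1 vA2.
pose psi s := if s is x :: s' then (if x then p2 s' else p1 s') else [set v].
have sub1' s : size s <= m -> p1 s \subset v |: (A1 :|: A2).
  by move=> sm; apply/subsetP => x /(subsetP (sub1 s sm)) xA; rewrite !inE xA !orbT.
have sub2' s : size s <= m -> p2 s \subset v |: (A1 :|: A2).
  by move=> sm; apply/subsetP => x /(subsetP (sub2 s sm)) xA; rewrite !inE xA !orbT.
exists psi; split.
- case=> [|[] s] /= sm; [exact: connected_in1 | exact: conn2 | exact: conn1].
- have vp1 s : size s <= m -> v \notin p1 s.
    by move=> sm; apply: contra vA1; apply/subsetP/sub1.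
  have vp2 s : size s <= m -> v \notin p2 s.
    by move=> sm; apply: contra vA2; apply/subsetP/sub2.
  case=> [|x s] [|y t] //= sm tm st.
  + by rewrite disjoints1; case: y; [apply: vp2 | apply: vp1].
  + by rewrite disjoint_sym disjoints1; case: x; [apply: vp2 | apply: vp1].
  + move: st; rewrite eqseq_cons; case: x; case: y => /= st.
    * exact: disj2.
    * by apply: disjointWl (sub2 s sm) (disjointWr (sub1 t tm) _); rewrite disjoint_sym.
    * exact: disjointWl (sub1 s sm) (disjointWr (sub2 t tm) A12).
    * exact: disj1.
- case=> [|y s] x /= sm; last by case: y; [apply: adj2 | apply: adj1].
  by exists v, (if x then c2 else c1); case: x; rewrite set11.
- case=> [|[] s] /= sm; [by rewrite sub1set setU11 | exact: sub2' | exact: sub1'].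
- exact: set11.
Qed.

Lemma binary_minor_in_rooted (A : {set V}) v m :
  binary_minor_in A v m -> binary_rooted_minor e v m.
Proof.
move=> [psi [conn disj adj _ root]].
have nonempty s : size s <= m -> psi s != set0.
  case/lastP: s => [_|s x]; first by apply/set0Pn; exists v.
  rewrite size_rcons => sm; have [a [b [_ hb _]]] := adj s x sm.
  by apply/set0Pn; exists b.
exists (fun j : 'I_(cbt_size m) => psi (heap_word j)); split.
- by move=> j; apply/nonempty/size_heap_word.
- by move=> j; apply/conn/size_heap_word.
- move=> i j ij; apply: disj; try exact: size_heap_word.
  by apply: contra ij => /eqP/heap_word_inj/val_inj->.
- move=> i j /heap_word_cbt_rel[[x E]|[x E]].
    have sm : size (heap_word i) < m.
      by have := size_heap_word (ltn_ord j); rewrite E size_rcons.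
    by have [a [b [ha hb eab]]] := adj _ x sm; exists a, b; rewrite E.
  have sm : size (heap_word j) < m.
    by have := size_heap_word (ltn_ord i); rewrite E size_rcons.
  by have [a [b [ha hb eab]]] := adj _ x sm; exists b, a; rewrite E esym.
- exact: root.
Qed.

End BinaryMinors.

Section Combs.
Variables (V : finType) (e : rel V) (r : V).

Definition tooth (v : V) (B : {set V}) (t : seq V) :=
  [/\ is_path e t, 1 < size t, last r t = v, is_leaf e r (head r t)
    & forall x, x \in t -> x != v -> x \in B].

Definition comb_at (v : V) (A : {set V}) (k : nat) :=
  exists (P : seq V) (Q : nat -> seq V),
  [/\ is_path e (v :: P) /\ {subset v :: P <= A},
      forall i, i < k -> [/\ is_path e (Q i), 1 < size (Q i),
        last r (Q i) \in v :: P, {subset Q i <= A} & is_leaf e r (head r (Q i))],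
      forall i x, i < k -> x \in Q i -> x != last r (Q i) -> x \notin v :: P
    & forall i j x, i < k -> j < k -> i != j -> x \in Q i -> x \notin Q j].

Lemma comb_at0 v (A : {set V}) : v \in A -> comb_at v A 0.
Proof.
by move=> vA; exists [::], (fun=> [::]); split=> //; split=> // x; rewrite inE => /eqP->.
Qed.

Lemma comb_atW v (A B : {set V}) k : A \subset B -> comb_at v A k -> comb_at v B k.
Proof.
move=> /subsetP AB [P [Q [[pP sP] tQ nQ dQ]]]; exists P, Q; split=> //.
  by split=> // x /sP /AB.
by move=> i ik; have [? ? ? sQ ?] := tQ i ik; split=> // x /sQ /AB.
Qed.

Lemma comb_at_cons c (A : {set V}) v k : comb_at c A k -> e v c -> v \notin A ->
  comb_at v (v |: A) k.
Proof.
move=> [P [Q [[pP sP] tQ nQ dQ]]] evc vA.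
have vP : v \notin c :: P by apply: contra vA => /sP.
exists (c :: P), Q; split=> //.
- split; first exact: is_path_cons.
  by move=> x /predU1P[->|/sP]; [exact: setU11 | exact: setU1r].
- move=> i ik; have [? ? lQ sQ ?] := tQ i ik; split=> //.
    by rewrite inE lQ orbT.
  by move=> x /sQ; exact: setU1r.
- move=> i x ik xQ xl; rewrite inE negb_or (nQ i x) // andbT.
  by have [_ _ _ sQ _] := tQ i ik; apply: contraNneq vA => <-; apply: sQ.
Qed.

Lemma comb_at_tooth c (A B : {set V}) v k t : comb_at c A k -> e v c ->
  v \notin A -> [disjoint A & B] -> tooth v B t ->
  comb_at v (v |: (A :|: B)) k.+1.
Proof.
move=> [P [Q [[pP sP] tQ nQ dQ]]] evc vA AB [pt st lt ht tB].
have vP : v \notin c :: P by apply: contra vA => /sP.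
have AnB x : x \in A -> x \notin B by move=> xA; rewrite (disjointFr AB xA).
have tA x : x \in t -> x \in A -> x = v.
  by move=> xt xA; apply/eqP; apply: contraNT (AnB x xA) => /(tB x xt).
have inA x : x \in A -> x \in v |: (A :|: B) by move=> xA; rewrite !inE xA orbT.
have inB x : x \in B -> x \in v |: (A :|: B) by move=> xB; rewrite !inE xB !orbT.
have Qv i : i < k -> v \notin Q i.
  by move=> ik; have [_ _ _ sQ _] := tQ i ik; apply: contra vA => /sQ.
exists (c :: P), (fun i => if i < k then Q i else t); split.
- split; first exact: is_path_cons.
  by move=> x /predU1P[->|/sP]; [exact: setU11 | exact: inA].
- move=> i ik; case: ifP => [ik' | _].
    have [? ? lQ sQ ?] := tQ i ik'; split=> //; first by rewrite inE lQ orbT.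
    by move=> x /sQ; exact: inA.
  split=> //; first by rewrite lt mem_head.
  by move=> x xt; case: (eqVneq x v) => [->|xv]; [exact: setU11 | exact/inB/tB].
- move=> i x ik; case: ifP => [ik' xQ xl | _ xt]; rewrite inE negb_or.
    by rewrite (nQ i x) // andbT; apply: contraNneq (Qv i ik') => <-.
  by rewrite lt => xv; rewrite xv /=; apply/negP => /sP/AnB; rewrite (tB x xt xv).
- move=> i j x ik jk ij; case: ifP => ik'; case: ifP => jk'.
  + exact: dQ.
  + move=> xQ; apply: contra (Qv i ik') => xt.
    by have [_ _ _ sQ _] := tQ i ik'; rewrite -(tA x xt (sQ x xQ)).
  + move=> xt; apply: contra (Qv j jk') => xQ.
    by have [_ _ _ sQ _] := tQ j jk'; rewrite -(tA x xt (sQ x xQ)).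
  + have lastk l : l < k.+1 -> (l < k) = false -> l = k.
      by move=> lk lk'; apply/eqP; rewrite eqn_leq -ltnS lk leqNgt lk'.
    by move: ij; rewrite (lastk i ik ik') (lastk j jk jk') eqxx.
Qed.

End Combs.

Section Subtrees.
Variables (V : finType) (e : rel V) (r : V).
Hypotheses (esym : symmetric e) (eirr : irreflexive e) (eacyc : acyclic e).

Definition subtree (v : V) (C : {set V}) : {set V} :=
  v |: \bigcup_(c in C) branch e v c.

(* Every c in C is a child of v (its branch avoids the root r), and C is
   empty exactly when v is a leaf; the induction applies it to the set of
   all children of v. *)
Definition children_set (v : V) (C : {set V}) :=
  [/\ C \subset nbhd e v, is_leaf e r v = (C == set0)
    & forall c, c \in C -> r \notin branch e v c].

Definition nleaves (A : {set V}) : nat := #|[set x in A | is_leaf e r x]|.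

Lemma mem_subtree v (C : {set V}) : v \in subtree v C.
Proof. exact: setU11. Qed.

Lemma branch_sub_subtree v (C : {set V}) c : c \in C ->
  branch e v c \subset subtree v C.
Proof. by move=> cC; apply/subsetP => x xc; apply/setU1r/bigcupP; exists c. Qed.

Lemma leaf_child v c : e v c -> c != r -> is_leaf e r c = (nbhd e c :\ v == set0).
Proof.
move=> evc cr; rewrite /is_leaf (negbTE cr) (cardsD1 v) inE esym evc.
by rewrite add1n eqSS cards_eq0.
Qed.

Lemma children_set_root : children_set r (nbhd e r).
Proof.
split=> //; first by rewrite /is_leaf eqxx cards_eq0.
by move=> c; rewrite inE => /(branch_notin eirr).
Qed.

Lemma nleaves_subtree0 v : nleaves (subtree v set0) <= 1.
Proof.
rewrite /nleaves /subtree big_set0 setU0 -(cards1 v).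
by apply/subset_leq_card/subsetP => x; rewrite inE => /andP[].
Qed.

Lemma exists_tooth v c : e v c -> r \notin branch e v c ->
  exists t, tooth e r v (branch e v c) t.
Proof.
have [n] := ubnP #|branch e v c|; elim: n v c => // n IH v c cn evc rn.
have cr : c != r by apply: contraNneq rn => <-; apply: mem_branch.
have vc := branch_notin eirr evc.
have [N0|[c' c'N]] := set_0Vmem (nbhd e c :\ v).
  exists [:: c; v]; split=> //.
  - apply: is_path_cons => //=; first by rewrite esym.
    by rewrite inE; apply: contraNneq vc => <-; apply: mem_branch.
  - by rewrite /= (leaf_child evc cr) N0.
  - by move=> x; rewrite !inE => /orP[/eqP->|->] //; rewrite mem_branch.
have ecc' : e c c' by move: c'N; rewrite !inE => /andP[].
have sub := branch_childW esym eirr eacyc evc c'N.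
have [t [pt st lt ht tB]] : exists t, tooth e r c (branch e c c') t.
  apply: (IH _ _ _ ecc'); last by apply: contra rn => /(subsetP sub).
  rewrite -ltnS; apply: leq_trans cn; rewrite ltnS.
  apply/proper_card/properP; split=> //.
  exists c; first exact: mem_branch.
  exact (branch_notin eirr ecc').
have tc x : x \in t -> x \in branch e v c.
  move=> xt; case: (eqVneq x c) => [->|xc]; first exact: mem_branch.
  exact/(subsetP sub)/tB.
exists (rcons t v); split.
- apply: (is_path_rcons (x := r)) pt _ _; first by rewrite lt esym.
  by apply: contra vc => /tc.
- by rewrite size_rcons ltnW.
- exact: last_rcons.
- by case: (t) st ht.
- by move=> x; rewrite mem_rcons inE => /predU1P[->|/tc]; rewrite ?eqxx.
Qed.

Section Children.
Variables (v : V) (C : {set V}).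
Hypothesis vC : children_set v C.

Lemma children_set_adj c : c \in C -> e v c.
Proof. by case: vC => /subsetP sub _ _ /sub; rewrite inE. Qed.

Lemma children_set_child c : c \in C -> children_set c (nbhd e c :\ v).
Proof.
move=> cC; have evc := children_set_adj cC; case: vC => _ _ rC.
have cr : c != r by apply: contraNneq (rC c cC) => <-; apply: mem_branch.
split; [exact: subsetDl | exact: leaf_child |].
by move=> c' c'N; apply: contra (rC c cC); apply/subsetP/branch_childW.
Qed.

Lemma subtree_child c : c \in C -> subtree c (nbhd e c :\ v) = branch e v c.
Proof. by move=> cC; rewrite /subtree -branch_children // children_set_adj. Qed.

Lemma card_branch_subtree c : c \in C -> #|branch e v c| < #|subtree v C|.
Proof.
move=> cC; apply/proper_card/properP; split; first exact: branch_sub_subtree.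
by exists v; [exact: mem_subtree | apply/branch_notin/children_set_adj].
Qed.

Lemma nleaves_subtree : C != set0 ->
  nleaves (subtree v C) <= \sum_(c in C) nleaves (branch e v c).
Proof.
case: vC => _ vleaf _ C0.
apply: leq_trans (card_bigcup_leq C (fun c => [set x in branch e v c | is_leaf e r x])).
apply/subset_leq_card/subsetP => x; rewrite inE => /andP[/setU1P[->|]].
  by rewrite vleaf (negbTE C0).
by case/bigcupP=> c cC xc lx; apply/bigcupP; exists c; rewrite // inE xc.
Qed.

Lemma comb_at_child c k : c \in C ->
  comb_at e r c (branch e v c) k -> comb_at e r v (subtree v C) k.
Proof.
move=> cC comb; have evc := children_set_adj cC.
apply: comb_atW (comb_at_cons comb evc (branch_notin eirr evc)).
exact/setUS/bigcup_sup.
Qed.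

Lemma comb_at_children c c' k : c \in C -> c' \in C -> c != c' ->
  comb_at e r c (branch e v c) k -> comb_at e r v (subtree v C) k.+1.
Proof.
move=> cC c'C cc' comb.
have evc := children_set_adj cC; have evc' := children_set_adj c'C.
have [t tt] : exists t, tooth e r v (branch e v c') t.
  by apply: exists_tooth evc' _; case: vC => _ _; apply.
have := comb_at_tooth comb evc (branch_notin eirr evc)
  (branch_disjoint esym eirr eacyc evc evc' cc') tt.
by apply: comb_atW; apply/setUS; rewrite subUset !bigcup_sup.
Qed.

Lemma binary_minor_child c m : c \in C ->
  binary_minor_in e (branch e v c) c m -> binary_minor_in e (subtree v C) v m.
Proof.
move=> cC M; have evc := children_set_adj cC.
apply: binary_minor_inW (binary_minor_in_parent esym M evc (branch_notin eirr evc)).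
exact/setUS/bigcup_sup.
Qed.

Lemma binary_minor_children c c' m : c \in C -> c' \in C -> c != c' ->
  binary_minor_in e (branch e v c) c m -> binary_minor_in e (branch e v c') c' m ->
  binary_minor_in e (subtree v C) v m.+1.
Proof.
move=> cC c'C cc' M M'.
have evc := children_set_adj cC; have evc' := children_set_adj c'C.
have := binary_minor_in_join M M' evc evc' (branch_disjoint esym eirr eacyc evc evc' cc')
  (branch_notin eirr evc) (branch_notin eirr evc').
by apply: binary_minor_inW; apply/setUS; rewrite subUset !bigcup_sup.
Qed.

End Children.

Variable D : nat.
Hypothesis deg : forall x, #|nbhd e x| <= D.

Section Branching.
Variables (v : V) (C : {set V}).
Hypothesis vC : children_set v C.
Hypothesis IH_child : forall c b k, c \in C ->
  ~ binary_minor_in e (branch e v c) c b.+1 ->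
  f D b k < nleaves (branch e v c) -> comb_at e r c (branch e v c) k.

Lemma comb_at_branching c1 c2 b k : c1 \in C -> c2 \in C -> c1 != c2 ->
  ~ binary_minor_in e (subtree v C) v b.+2 ->
  f D b.+1 k.+2 < nleaves (subtree v C) -> comb_at e r v (subtree v C) k.+2.
Proof.
move=> c1C c2C c12 noM many; apply: NNPP => nocomb.
have other c : c \in C -> exists2 c', c' \in C & c != c'.
  move=> cC; case: (eqVneq c c1) => [->|cc1]; last by exists c1.
  by exists c2; rewrite // eq_sym.
have small c b' : c \in C -> ~ binary_minor_in e (branch e v c) c b'.+1 ->
    nleaves (branch e v c) <= f D b' k.+1.
  move=> cC noMc; rewrite leqNgt; apply/negP => big; apply: nocomb.
  have [c' c'C cc'] := other c cC.
  exact: (comb_at_children vC cC c'C cc') (IH_child cC noMc big).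
have noMc c : c \in C -> ~ binary_minor_in e (branch e v c) c b.+2.
  by move=> cC /(binary_minor_child vC cC).
have [c0 c0C unique] : exists2 c0, c0 \in C &
    forall c, c \in C -> c != c0 -> ~ binary_minor_in e (branch e v c) c b.+1.
  case: (classic (exists2 c, c \in C & binary_minor_in e (branch e v c) c b.+1)).
    case=> c0 c0C M0; exists c0 => // c cC cc0 M; apply: noM.
    exact (binary_minor_children vC cC c0C cc0 M M0).
  by move=> none; exists c1 => // c cC _ M; apply: none; exists c.
have CD : #|C| <= D by apply: leq_trans (deg v); apply: subset_leq_card; case: vC.
have C0 : C != set0 by apply/set0Pn; exists c1.
have := sum_leq_f c0C CD (small c0 b.+1 c0C (noMc c0 c0C))
  (fun c cC cc0 => small c b cC (unique c cC cc0)).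
by move/(leq_trans (nleaves_subtree vC C0))/(leq_trans many); rewrite ltnn.
Qed.

End Branching.

Lemma comb_at_subtree v (C : {set V}) b k : children_set v C ->
  ~ binary_minor_in e (subtree v C) v b.+1 ->
  f D b k < nleaves (subtree v C) -> comb_at e r v (subtree v C) k.
Proof.
have [n] := ubnP #|subtree v C|; elim: n v C b k => // n IH v C b k sz vC noM many.
have IHc c b' k' : c \in C -> ~ binary_minor_in e (branch e v c) c b'.+1 ->
    f D b' k' < nleaves (branch e v c) -> comb_at e r c (branch e v c) k'.
  move=> cC; rewrite -(subtree_child vC cC); apply: IH (children_set_child vC cC).
  by rewrite (subtree_child vC cC); apply: leq_trans (card_branch_subtree vC cC) _.
case: k many => [|k] many; first exact/comb_at0/mem_subtree.
have [C0|[c1 c1C]] := set_0Vmem C.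
  by move: many (nleaves_subtree0 v) (f_gt0 D b k.+1); rewrite C0; lia.
have [C1|[c2]] := set_0Vmem (C :\ c1).
  have C0 : C != set0 by apply/set0Pn; exists c1.
  apply/(comb_at_child vC c1C)/(IHc c1 b _ c1C).
    by move=> /(binary_minor_child vC c1C).
  apply: leq_trans many (leq_trans (nleaves_subtree vC C0) _).
  by rewrite -(setD1K c1C) C1 setU0 big_set1.
rewrite !inE eq_sym => /andP[c12 c2C].
case: k many => [|k] many.
  exact/(comb_at_children vC c1C c2C c12)/comb_at0/mem_branch.
case: b noM many => [|b] noM many.
  by case: noM; apply: (binary_minor_children vC c1C c2C c12);
    apply/binary_minor_in0/mem_branch.
exact (comb_at_branching vC IHc c1C c2C c12 noM many).
Qed.

End Subtrees.

Unset Implicit Arguments.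
Set Strict Implicit.

Theorem corollary16 (D b k : nat) (V : finType) (e : rel V) (r : V) :
  1 <= D -> 1 <= k ->
  is_tree e ->
  (forall x : V, #|nbhd e x| <= D) ->
  (forall d : nat, binary_rooted_minor e r d -> d <= b) ->
  f D b k < #|[pred x | is_leaf e r x]| ->
  has_leaf_comb e r k.
Proof.
move=> _ _ [esym eirr econn eacyc] deg depth many.
have root : subtree e r (nbhd e r) = setT by apply: branches_cover.
have noM : ~ binary_minor_in e (subtree e r (nbhd e r)) r b.+1.
  by move=> /(binary_minor_in_rooted esym)/depth; rewrite ltnn.
have many' : f D b k < nleaves e r (subtree e r (nbhd e r)).
  rewrite root /nleaves; apply: leq_trans many _.
  by apply/eq_leq/eq_card => x; rewrite !inE.
have [P [Q [[pP _] tQ nQ dQ]]] :=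
  comb_at_subtree esym eirr eacyc deg (children_set_root r eirr) noM many'.
exists (r :: P), (fun i : 'I_k => Q i); split=> //.
- by move=> i; have [? ? ? _ _] := tQ i (ltn_ord i).
- by move=> i x; apply: nQ.
- by move=> i j x ij; apply: dQ.
- by move=> i; have [_ _ _ _ ?] := tQ i (ltn_ord i).
Qed.
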